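(* Let $t$ be a positive integer. Fix complex numbers $\alpha,\beta$ with $\alpha^4=1+i\sqrt t$ and $\beta^4=-1+i\sqrt t$, and put $\gamma=\alpha\beta$ (so $\gamma^4=-t-1$). For integers $x,y$ let $\xi(x,y)=\sqrt2\,\alpha\,(x-i\sqrt t\,y)$ and $\eta(x,y)=\sqrt2\,\beta\,(x+i\sqrt t\,y)$. If $(x_1,y_1)$ and $(x_2,y_2)$ are two pairs of rational integers, then $$\frac{\xi(x_1,y_1)\,\eta(x_2,y_2)}{\gamma},\qquad \xi(x_1,y_1)^3\,\xi(x_2,y_2),\qquad \eta(x_1,y_1)^3\,\eta(x_2,y_2)$$ are algebraic integers lying in $\mathbb{Q}(\sqrt{-t})$.
   Context: $\sqrt{-t}=i\sqrt t$. The quantity $\gamma$ plays the role of the fourth root $(-t-1)^{1/4}$ chosen compatibly with $\alpha,\beta$. *)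

From HB Require Import structures.
From mathcomp Require Import all_boot all_order all_algebra all_field.
Set Implicit Arguments. Unset Strict Implicit. Unset Printing Implicit Defensive.
Import Order.TTheory GRing.Theory Num.Theory.
Local Open Scope ring_scope.

(* Complex numbers are modelled by algC (algebraic complex numbers); all the
   quantities in the statement are algebraic. sqrt t := sqrtC t (nonnegative
   root), and sqrt(-t) := 'i * sqrtC t as fixed in the paper. *)

Definition sqrt_negt (t : nat) : algC := 'i * sqrtC (t%:R).

Definition xif (t : nat) (alpha : algC) (x y : int) : algC :=
  sqrtC 2 * alpha * (x%:~R - sqrt_negt t * y%:~R).

Definition etaf (t : nat) (beta : algC) (x y : int) : algC :=
  sqrtC 2 * beta * (x%:~R + sqrt_negt t * y%:~R).

Definition in_Q_sqrt_negt (t : nat) (z : algC) : Prop :=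
  exists a b : rat, z = ratr a + ratr b * sqrt_negt t.

From HB Require Import structures.
From mathcomp Require Import all_boot all_order all_algebra all_field.
From mathcomp Require Import ring.
Import Order.TTheory GRing.Theory Num.Theory.
Set Implicit Arguments.
Unset Strict Implicit.
Unset Printing Implicit Defensive.
Local Open Scope ring_scope.

(* Put u := sqrt(-t). Since sqrt(2)^2 = 2, alpha^4 = 1 + u, beta^4 = -1 + u and
   gamma = alpha beta, the three numbers are
     2 (x1 - u y1)(x2 + u y2),
     4 (1 + u)(x1 - u y1)^3 (x2 - u y2),
     4 (-1 + u)(x1 + u y1)^3 (x2 + u y2),
   i.e. elements of the ring Z[u], whose elements are algebraic integers of
   Q(u) because u is a root of the monic integer polynomial X^2 + t. *)

Section QuadraticIntegers.

Variables (d : int) (u : algC).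
Hypothesis u_sqr : u ^+ 2 = d%:~R.

Definition in_Zsqrt (z : algC) : Prop := exists a b : int, z = a%:~R + b%:~R * u.

Lemma in_Zsqrt_int (x : int) : in_Zsqrt x%:~R.
Proof. by exists x, 0; rewrite mul0r addr0. Qed.

Lemma in_Zsqrt_nat (n : nat) : in_Zsqrt n%:R.
Proof. exact: in_Zsqrt_int n. Qed.

Lemma in_Zsqrt_root : in_Zsqrt u.
Proof. by exists 0, 1; rewrite add0r mul1r. Qed.

Lemma in_Zsqrt_intD (x y : int) : in_Zsqrt (x%:~R + u * y%:~R).
Proof. by exists x, y; rewrite mulrC. Qed.

Lemma in_Zsqrt_intB (x y : int) : in_Zsqrt (x%:~R - u * y%:~R).
Proof. by exists x, (- y); rewrite intrN mulNr mulrC. Qed.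

Lemma in_ZsqrtD x y : in_Zsqrt x -> in_Zsqrt y -> in_Zsqrt (x + y).
Proof.
move=> [a [b ->]] [c [e ->]]; exists (a + c), (b + e).
by rewrite !intrD; ring.
Qed.

Lemma in_ZsqrtN x : in_Zsqrt x -> in_Zsqrt (- x).
Proof. by move=> [a [b ->]]; exists (- a), (- b); rewrite !intrN; ring. Qed.

Lemma in_ZsqrtM x y : in_Zsqrt x -> in_Zsqrt y -> in_Zsqrt (x * y).
Proof.
move=> [a [b ->]] [c [e ->]]; exists (a * c + d * b * e), (a * e + b * c).
by rewrite !(intrD, intrM) -u_sqr; ring.
Qed.

Lemma in_ZsqrtX x n : in_Zsqrt x -> in_Zsqrt (x ^+ n).
Proof.
move=> Zx; elim: n => [|n IHn]; first exact: (in_Zsqrt_int 1).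
by rewrite exprS; apply: in_ZsqrtM.
Qed.

Lemma Aint_sqrt : u \in Aint.
Proof.
apply: (@root_monic_Aint ('X^2 - d%:~R%:P)).
- by rewrite /root !hornerE u_sqr subrr.
- by rewrite monicXnsubC.
- by rewrite polyOverXnsubC rpred_int.
Qed.

Lemma in_Zsqrt_Aint z : in_Zsqrt z -> z \in Aint.
Proof.
move=> [a [b ->]].
by rewrite rpredD ?rpredM ?Aint_int ?Aint_sqrt.
Qed.

Lemma in_Zsqrt_rat z : in_Zsqrt z -> exists a b : rat, z = ratr a + ratr b * u.
Proof. by move=> [a [b ->]]; exists a%:~R, b%:~R; rewrite !rmorph_int. Qed.

End QuadraticIntegers.

Lemma sqrt_negt_sqr t : sqrt_negt t ^+ 2 = (- t%:Z)%:~R.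
Proof. by rewrite /sqrt_negt exprMn sqrCi sqrtCK mulN1r intrN. Qed.

Lemma in_Zsqrt_negt_Aint_Q t z :
  in_Zsqrt (sqrt_negt t) z -> z \in Aint /\ in_Q_sqrt_negt t z.
Proof.
move=> Zz; split; first by apply: (in_Zsqrt_Aint (sqrt_negt_sqr t)).
exact: in_Zsqrt_rat Zz.
Qed.

(* (a b)^4 = u^2 - 1 = -t - 1, so no positivity of t is needed. *)
Lemma sqrt_negt_fourth_roots_mul_neq0 t (a b : algC) :
  a ^+ 4 = 1 + sqrt_negt t -> b ^+ 4 = -1 + sqrt_negt t -> a * b != 0.
Proof.
move=> ha hb; have ab4 : (a * b) ^+ 4 = - (t.+1)%:R.
  rewrite exprMn ha hb.
  have -> : (1 + sqrt_negt t) * (-1 + sqrt_negt t) = sqrt_negt t ^+ 2 - 1 by ring.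
  by rewrite sqrt_negt_sqr intrN -natr1 opprD.
by apply: contra_eq_neq ab4 => ->; rewrite expr0n eq_sym oppr_eq0 pnatr_eq0.
Qed.

Lemma sqrt2_scaled_mul (a b w w' : algC) :
  (sqrtC 2 * a * w) * (sqrtC 2 * b * w') = 2 * (a * b) * (w * w').
Proof. by rewrite -[2 in RHS](@sqrtCK _ 2); ring. Qed.

Lemma sqrt2_scaled_cube_mul (a w w' : algC) :
  (sqrtC 2 * a * w) ^+ 3 * (sqrtC 2 * a * w') = 4 * a ^+ 4 * (w ^+ 3 * w').
Proof.
have -> : 4 = sqrtC 2 ^+ 2 ^+ 2 :> algC by rewrite sqrtCK; ring.
by ring.
Qed.

Theorem lemma3p3 (t : nat) (ht : (0 < t)%N) (alpha beta : algC)
  (halpha : alpha ^+ 4 = 1 + 'i * sqrtC (t%:R))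
  (hbeta : beta ^+ 4 = -1 + 'i * sqrtC (t%:R))
  (x1 y1 x2 y2 : int) :
  let gamma := alpha * beta in
  let z1 := xif t alpha x1 y1 * etaf t beta x2 y2 / gamma in
  let z2 := xif t alpha x1 y1 ^+ 3 * xif t alpha x2 y2 in
  let z3 := etaf t beta x1 y1 ^+ 3 * etaf t beta x2 y2 in
  [/\ z1 \in Aint /\ in_Q_sqrt_negt t z1,
      z2 \in Aint /\ in_Q_sqrt_negt t z2 &
      z3 \in Aint /\ in_Q_sqrt_negt t z3].
Proof.
move=> gamma z1 z2 z3; rewrite -/(sqrt_negt t) in halpha hbeta.
have gamma_neq0 : gamma != 0 := sqrt_negt_fourth_roots_mul_neq0 halpha hbeta.
set u := sqrt_negt t in halpha hbeta *.
have u_sqr : u ^+ 2 = (- t%:Z)%:~R := sqrt_negt_sqr t.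
have ZM := in_ZsqrtM u_sqr.
split; apply: in_Zsqrt_negt_Aint_Q; rewrite -/u.
- have -> : z1 = 2 * ((x1%:~R - u * y1%:~R) * (x2%:~R + u * y2%:~R)).
    by rewrite /z1 /xif /etaf -/u sqrt2_scaled_mul -/gamma; field.
  exact: (ZM _ _ (in_Zsqrt_nat u 2) (ZM _ _ (in_Zsqrt_intB _ _ _) (in_Zsqrt_intD _ _ _))).
- rewrite /z2 /xif -/u sqrt2_scaled_cube_mul halpha.
  have Z1u : in_Zsqrt u (1 + u) := in_ZsqrtD (in_Zsqrt_nat u 1) (in_Zsqrt_root u).
  apply: (ZM _ _ (ZM _ _ (in_Zsqrt_nat u 4) Z1u)).
  exact: (ZM _ _ (in_ZsqrtX u_sqr 3 (in_Zsqrt_intB _ _ _)) (in_Zsqrt_intB _ _ _)).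
- rewrite /z3 /etaf -/u sqrt2_scaled_cube_mul hbeta.
  have ZN1u : in_Zsqrt u (-1 + u) :=
    in_ZsqrtD (in_ZsqrtN (in_Zsqrt_nat u 1)) (in_Zsqrt_root u).
  apply: (ZM _ _ (ZM _ _ (in_Zsqrt_nat u 4) ZN1u)).
  exact: (ZM _ _ (in_ZsqrtX u_sqr 3 (in_Zsqrt_intD _ _ _)) (in_Zsqrt_intD _ _ _)).
Qed.
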